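(* Let $d\geq 2$ and let $\omega_{2d}=\{\mathbf x_1,\ldots,\mathbf x_{2d}\}$ be an antipodal configuration of $2d$ points on the unit sphere $S^{d-1}\subset\mathbb R^d$. Then $$\eta(\omega_{2d},S^{d-1}):=\min_{\mathbf x\in S^{d-1}}\max_{1\le i\le 2d}\mathbf x\cdot\mathbf x_i\leq \frac{1}{\sqrt d}.$$ Equality holds if and only if $\omega_{2d}$ is the set of vertices of a regular cross-polytope inscribed in $S^{d-1}$, i.e. $\omega_{2d}=\{\pm\mathbf a_1,\ldots,\pm\mathbf a_d\}$ for some orthonormal basis $\{\mathbf a_1,\ldots,\mathbf a_d\}$ of $\mathbb R^d$.
   Context: $S^{d-1}=\{\mathbf x\in\mathbb R^d:|\mathbf x|=1\}$. A configuration is a list of points (points may coincide). A configuration on $S^{d-1}$ is antipodal if together with a point $\mathbf x$ it contains $-\mathbf x$. *)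

From HB Require Import structures.
From mathcomp Require Import all_boot all_order all_algebra.
From mathcomp Require Import boolp classical_sets reals.
Set Implicit Arguments. Unset Strict Implicit. Unset Printing Implicit Defensive.
Import Order.TTheory GRing.Theory Num.Theory.
Local Open Scope ring_scope.
Local Open Scope classical_set_scope.

Definition dotp (R : realType) (d : nat) (u v : 'rV[R]_d) : R := (u *m v^T) 0 0.

Definition sphere (R : realType) (d : nat) : set 'rV[R]_d :=
  [set x | dotp x x = 1].

(* a configuration is a list of points (repetitions allowed) *)
Definition on_sphere (R : realType) (d : nat) (s : seq 'rV[R]_d) : Prop :=
  forall v, v \in s -> dotp v v = 1.

Definition antipodal (R : realType) (d : nat) (s : seq 'rV[R]_d) : Prop :=
  forall v, v \in s -> - v \in s.

Definition maxdot (R : realType) (d : nat) (s : seq 'rV[R]_d) (x : 'rV[R]_d) : R :=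
  \big[Num.max/dotp x (head 0 s)]_(v <- s) dotp x v.

Definition eta_cov (R : realType) (d : nat) (s : seq 'rV[R]_d) : R :=
  inf [set maxdot s x | x in @sphere R d].

Definition orthonormal_basis (R : realType) (d : nat) (a : 'I_d -> 'rV[R]_d) : Prop :=
  forall i j, dotp (a i) (a j) = (i == j)%:R.

From HB Require Import structures.
From mathcomp Require Import all_boot all_order all_algebra.
From mathcomp Require Import boolp classical_sets reals.
From mathcomp Require Import ring lra.
Set Implicit Arguments. Unset Strict Implicit. Unset Printing Implicit Defensive.
Import Order.TTheory GRing.Theory Num.Theory.
Local Open Scope ring_scope.

(* Keeping one vector of each antipodal pair (and padding) gives a d x d
   matrix Y with unit rows y_i such that every point of the configuration is
   some +-y_i, so it suffices to find a unit x with |x.y_i| <= 1/sqrt d.  If Y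
   is singular, take x orthogonal to all rows.  Otherwise let (z_j) be the
   dual basis, y_i.z_j = delta_ij.  Cauchy-Schwarz gives |z_j| >= 1, and signs
   e_j chosen greedily give |w|^2 >= sum |z_j|^2 >= d for w = sum e_j z_j, so
   x = w/|w| satisfies |x.y_i| = 1/|w| <= 1/sqrt d.  The inequality is strict
   unless every |z_j| = 1, which forces z_j = y_j, i.e. orthonormal rows.
   Conversely, for a cross-polytope {+-a_i}, Parseval gives
   sum_i (x.a_i)^2 = 1 for every unit x, so some x.(+-a_i) >= 1/sqrt d. *)

Section Dotp.
Variables (R : realType) (d : nat).
Implicit Types (u v w : 'rV[R]_d).

Lemma dotpE u v : dotp u v = \sum_k u 0 k * v 0 k.
Proof. by rewrite /dotp !mxE; apply: eq_bigr => k _; rewrite mxE. Qed.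

Lemma dotpC u v : dotp u v = dotp v u.
Proof. by rewrite !dotpE; apply: eq_bigr => k _; rewrite mulrC. Qed.

Lemma dotpDl u v w : dotp (u + v) w = dotp u w + dotp v w.
Proof. by rewrite !dotpE -big_split; apply: eq_bigr => k _; rewrite mxE mulrDl. Qed.

Lemma dotpZl a u w : dotp (a *: u) w = a * dotp u w.
Proof. by rewrite !dotpE mulr_sumr; apply: eq_bigr => k _; rewrite mxE mulrA. Qed.

Lemma dotpNl u w : dotp (- u) w = - dotp u w.
Proof. by rewrite -scaleN1r dotpZl mulN1r. Qed.

Lemma dotpBl u v w : dotp (u - v) w = dotp u w - dotp v w.
Proof. by rewrite dotpDl dotpNl. Qed.

Lemma dotpDr u v w : dotp w (u + v) = dotp w u + dotp w v.
Proof. by rewrite dotpC dotpDl !(dotpC w). Qed.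

Lemma dotpZr a u w : dotp w (a *: u) = a * dotp w u.
Proof. by rewrite dotpC dotpZl dotpC. Qed.

Lemma dotpNr u w : dotp w (- u) = - dotp w u.
Proof. by rewrite dotpC dotpNl dotpC. Qed.

Lemma dotpBr u v w : dotp w (u - v) = dotp w u - dotp w v.
Proof. by rewrite dotpDr dotpNr. Qed.

Lemma dotp_selfD u v : dotp (u + v) (u + v) = dotp u u + 2 * dotp u v + dotp v v.
Proof. by rewrite !dotpDl !dotpDr (dotpC v u); ring. Qed.

Lemma dotp_sumr n (F : 'I_n -> 'rV[R]_d) u :
  dotp u (\sum_i F i) = \sum_i dotp u (F i).
Proof.
rewrite dotpE; under eq_bigr do rewrite summxE mulr_sumr.
by rewrite exchange_big; apply: eq_bigr => i _; rewrite dotpE.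
Qed.

Lemma dotp_row m n (A : 'M[R]_(m, d)) (B : 'M[R]_(n, d)) i j :
  dotp (row i A) (row j B) = (A *m B^T) i j.
Proof. by rewrite /dotp !mxE; apply: eq_bigr => k _; rewrite !mxE. Qed.

Lemma dotp_ge0 u : 0 <= dotp u u.
Proof. by rewrite dotpE sumr_ge0 // => k _; rewrite -expr2 sqr_ge0. Qed.

Lemma dotp_eq0 u : dotp u u = 0 -> u = 0.
Proof.
rewrite dotpE => u0; apply/rowP => k; rewrite mxE.
have := psumr_eq0P (P := predT) (fun i _ => sqr_ge0 (u 0 i)).
rewrite (eq_bigr (fun i => u 0 i * u 0 i)) ?u0; last by move=> i _; rewrite expr2.
by move=> /(_ erefl k erefl) /eqP; rewrite sqrf_eq0 => /eqP.
Qed.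

Lemma dotp_gt0 u : u != 0 -> 0 < dotp u u.
Proof.
by move=> u0; rewrite lt_def dotp_ge0 andbT; apply: contra u0 => /eqP/dotp_eq0->.
Qed.

Lemma unit_neq0 u : dotp u u = 1 -> u != 0.
Proof.
move=> u1; apply/eqP => u0; move: u1; rewrite u0 -(scale0r (0 : 'rV[R]_d)).
by rewrite dotpZl mul0r => /eqP; rewrite eq_sym oner_eq0.
Qed.

Lemma sqr_dotp_le_unit u v : dotp u u = 1 -> dotp u v ^+ 2 <= dotp v v.
Proof.
move=> u1; have := dotp_ge0 (v - dotp u v *: u).
rewrite dotpBl !dotpBr !dotpZl !dotpZr u1 (dotpC v u).
by rewrite mulr1 subrr subr0 subr_ge0 expr2.
Qed.

Lemma unit_dotp_eq1 u v : dotp u u = 1 -> dotp v v = 1 -> dotp u v = 1 -> v = u.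
Proof.
move=> u1 v1 uv1; apply/subr0_eq/dotp_eq0.
by rewrite dotpBl !dotpBr u1 v1 (dotpC v u) uv1 !subrr.
Qed.

(* Greedy choice: e_(k+1) takes the sign of z_(k+1).(e_1 z_1 + ... + e_k z_k),
   so the cross term added at each step is nonnegative. *)
Lemma exists_signs_dotp_sum_ge n (z : 'I_n -> 'rV[R]_d) : exists e : 'I_n -> R,
  (forall i, `|e i| = 1) /\
  \sum_i dotp (z i) (z i) <= dotp (\sum_i e i *: z i) (\sum_i e i *: z i).
Proof.
elim: n z => [|n IHn] z.
  by exists (fun _ => 1); split=> [i|]; [case: i | rewrite big_ord0 dotp_ge0].
have [e' [e'1 le_e']] := IHn (fun i => z (lift ord0 i)).
set u := \sum_i e' i *: z (lift ord0 i) in le_e'.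
pose sg : R := if 0 <= dotp (z ord0) u then 1 else -1.
have sg1 : `|sg| = 1 by rewrite /sg; case: ifP; rewrite ?normrN normr1.
have sg_ge0 : 0 <= sg * dotp (z ord0) u.
  rewrite /sg; case: ifP => [|/negbT]; rewrite ?mul1r // -ltNge mulN1r.
  by rewrite oppr_ge0 => /ltW.
exists (fun i => oapp e' sg (unlift ord0 i)); split.
  by move=> i; case: (unlift ord0 i) => [j|] /=.
rewrite !big_ord_recl /= unlift_none /=.
under [X in _ <= dotp (_ + X) _]eq_bigr do rewrite liftK /=.
under [X in _ <= dotp _ (_ + X)]eq_bigr do rewrite liftK /=.
rewrite -/u dotp_selfD dotpZl dotpZr mulrA -expr2.
rewrite -[sg ^+ 2]real_normK ?num_real // sg1 expr1n mul1r -addrA lerD2l.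
by rewrite (le_trans le_e') // dotpZl lerDr mulr_ge0.
Qed.

Definition normalize w := (Num.sqrt (dotp w w))^-1 *: w.

Lemma dotp_normalizel w u : dotp (normalize w) u = dotp w u / Num.sqrt (dotp w w).
Proof. by rewrite dotpZl mulrC. Qed.

Lemma normalize_unit w : 0 < dotp w w -> dotp (normalize w) (normalize w) = 1.
Proof.
move=> w0; rewrite dotp_normalizel dotpZr mulrAC -expr2 exprVn.
by rewrite sqr_sqrtr ?ltW // mulVf // gt_eqF.
Qed.

End Dotp.

Lemma ler_inv_sqrt (R : rcfType) (a b : R) :
  0 < a -> a <= b -> 1 / Num.sqrt b <= 1 / Num.sqrt a.
Proof.
move=> a0 ab; have b0 : 0 < b by apply: lt_le_trans ab.
by rewrite !div1r lef_pV2 ?posrE ?sqrtr_gt0 // ler_sqrt // ltW.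
Qed.

Lemma ltr_inv_sqrt (R : rcfType) (a b : R) :
  0 < a -> a < b -> 1 / Num.sqrt b < 1 / Num.sqrt a.
Proof.
move=> a0 ab; have b0 : 0 < b by apply: lt_trans ab.
by rewrite !div1r ltf_pV2 ?posrE ?sqrtr_gt0 // ltr_sqrt.
Qed.

Lemma sum_ge1_le_card_eq1 (R : numDomainType) n (F : 'I_n -> R) :
  (forall i, 1 <= F i) -> \sum_i F i <= n%:R -> forall i, F i = 1.
Proof.
move=> F_ge1 le_sum i; apply/subr0_eq; move: i isT.
apply: psumr_eq0P => [i _|]; first by rewrite subr_ge0.
apply/eqP; rewrite eq_le sumrB sumr_const card_ord subr_le0 le_sum /=.
by rewrite subr_ge0 -[n in n%:R]card_ord -sumr_const ler_sum.
Qed.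

Lemma exists_ge_mean (R : realFieldType) n (F : 'I_n -> R) : (0 < n)%N ->
  exists i, (\sum_i F i) / n%:R <= F i.
Proof.
move=> n0; apply/not_existsP => lt_F.
have : \sum_i F i < \sum_(i < n) (\sum_i F i) / n%:R.
  apply: ltr_sum => [|i _].
    by apply/hasP; exists (Ordinal n0); rewrite ?mem_index_enum.
  by rewrite ltNge; apply/negP/lt_F.
by rewrite sumr_const card_ord -(mulr_natr (_ / _)) divfK ?ltxx // pnatr_eq0 -lt0n.
Qed.

Section SmallDotpRows.
Variables (R : realType) (d : nat) (Y : 'M[R]_d).

Lemma singular_exists_unit_orthogonal : \det Y = 0 ->
  exists x, dotp x x = 1 /\ forall i, dotp x (row i Y) = 0.
Proof.
move=> /eqP; rewrite -det_tr => /det0P [v v0 vY0].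
exists (normalize v); split=> [|i]; first exact/normalize_unit/dotp_gt0.
by rewrite dotp_normalizel -[v in dotp v _](row_id 0) dotp_row vY0 mxE mul0r.
Qed.

Lemma unitmx_exists_dual_basis : Y \in unitmx ->
  exists z : 'I_d -> 'rV[R]_d, forall i j, dotp (row i Y) (z j) = (i == j)%:R.
Proof.
move=> Yunit; exists (fun j => row j (invmx Y)^T) => i j.
by rewrite dotp_row trmxK mulmxV // mxE.
Qed.

Hypothesis unit_rows : forall i, dotp (row i Y) (row i Y) = 1.

Lemma dual_basis_orthonormal (z : 'I_d -> 'rV[R]_d) :
  (forall i j, dotp (row i Y) (z j) = (i == j)%:R) ->
  (forall j, dotp (z j) (z j) = 1) -> Y *m Y^T = 1%:M.
Proof.
move=> Yz z1; have zY j : z j = row j Y.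
  by apply: unit_dotp_eq1; rewrite ?unit_rows ?z1 ?Yz ?eqxx.
by apply/matrixP => i j; rewrite -dotp_row -(zY j) Yz mxE.
Qed.

Lemma unitmx_exists_signed_dual_sum : Y \in unitmx ->
  exists w, (forall i, `|dotp w (row i Y)| = 1) /\ d%:R <= dotp w w /\
    (dotp w w <= d%:R -> Y *m Y^T = 1%:M).
Proof.
move=> /unitmx_exists_dual_basis [z Yz].
have z_ge1 j : 1 <= dotp (z j) (z j).
  by have := sqr_dotp_le_unit (z j) (unit_rows j); rewrite Yz eqxx expr1n.
have d_le_sum : d%:R <= \sum_j dotp (z j) (z j).
  by rewrite -[d in d%:R]card_ord -sumr_const ler_sum.
have [e [e1 le_sum]] := exists_signs_dotp_sum_ge z.
exists (\sum_j e j *: z j); split=> [i|]; last split.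
- rewrite dotpC dotp_sumr (bigD1 i) //= big1 => [|j ji].
    by rewrite dotpZr Yz eqxx mulr1 addr0.
  by rewrite dotpZr Yz eq_sym (negbTE ji) mulr0.
- exact: le_trans le_sum.
move=> le_d; apply: (dual_basis_orthonormal Yz).
exact/(sum_ge1_le_card_eq1 z_ge1)/(le_trans le_sum).
Qed.

Lemma exists_unit_small_dotp_rows : (0 < d)%N ->
  exists x, dotp x x = 1 /\
    (forall i, `|dotp x (row i Y)| <= 1 / Num.sqrt d%:R) /\
    (Y *m Y^T != 1%:M -> forall i, `|dotp x (row i Y)| < 1 / Num.sqrt d%:R).
Proof.
move=> d_gt0; have d0 : (0 : R) < d%:R by rewrite ltr0n.
have c_gt0 : 0 < 1 / Num.sqrt (d%:R : R) by rewrite div1r invr_gt0 sqrtr_gt0.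
have [Ysing | Ynsing] := eqVneq (\det Y) 0.
  have [x [x1 xY]] := singular_exists_unit_orthogonal Ysing.
  by exists x; do !split=> // *; rewrite xY normr0 // ltW.
have /unitmx_exists_signed_dual_sum [w [wY [d_le YYT]]] : Y \in unitmx.
  by rewrite unitmxE unitfE.
have w0 : 0 < dotp w w by apply: lt_le_trans d_le.
have xY i : `|dotp (normalize w) (row i Y)| = 1 / Num.sqrt (dotp w w).
  by rewrite dotp_normalizel normrM wY normfV ger0_norm ?sqrtr_ge0 // div1r.
exists (normalize w); split; first exact: normalize_unit.
split=> [i|YYTn i]; rewrite xY; first exact: ler_inv_sqrt.
by apply: ltr_inv_sqrt; rewrite // ltNge; apply: contra YYTn => /YYT ->.
Qed.

End SmallDotpRows.

Lemma head_in (T : eqType) (x0 : T) s : s != [::] -> head x0 s \in s.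
Proof. by case: s => // v s _; rewrite mem_head. Qed.

Section SignRepresentatives.
Variables (R : realType) (d : nat).
Implicit Types (s : seq 'rV[R]_d) (u v w : 'rV[R]_d).

Fixpoint sign_reps s : seq 'rV[R]_d :=
  if s is v :: s' then
    if (v \in sign_reps s') || (- v \in sign_reps s') then sign_reps s'
    else v :: sign_reps s'
  else [::].

Lemma sign_reps_sub s : {subset sign_reps s <= s}.
Proof.
elim: s => [//|v s IHs] /= u; case: ifP => _.
  by move=> /IHs; rewrite inE orbC => ->.
by rewrite !inE => /orP [->//|/IHs ->]; rewrite orbT.
Qed.

Lemma sign_reps_cover s v : v \in s ->
  exists2 u, u \in sign_reps s & v = u \/ v = - u.
Proof.
elim: s => [//|x s IHs] /=; rewrite inE => /orP [/eqP ->|/IHs [u us vu]].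
  case: ifP => [/orP [xs|Nxs]|_]; first by exists x => //; left.
    by exists (- x) => //; right; rewrite opprK.
  by exists x; rewrite ?mem_head //; left.
by case: ifP => _; exists u => //; rewrite inE us orbT.
Qed.

Lemma sign_reps_uniq s : uniq (sign_reps s).
Proof.
elim: s => [//|v s IHs] /=; case: ifP => // /negbT.
by rewrite negb_or => /andP [vs _]; rewrite /= vs IHs.
Qed.

Lemma sign_reps_neq_opp s : (forall v, v \in s -> v != 0) ->
  {in sign_reps s &, forall u w, u != - w}.
Proof.
elim: s => [//|x s IHs] /= s_neq0.
have {}IHs : {in sign_reps s &, forall u w, u != - w}.
  by apply: IHs => v vs; apply: s_neq0; rewrite inE vs orbT.
case: ifP => [_|/negbT]; first exact: IHs.
rewrite negb_or => /andP [xs Nxs] u w; rewrite !inE.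
have x_neq_Nx : x != - x.
  apply: contra (s_neq0 x (mem_head _ _)).
  by rewrite -addr_eq0 -mulr2n -scaler_nat scaler_eq0 pnatr_eq0.
move=> /orP [/eqP ->|us] /orP [/eqP ->|ws] //.
- by apply: contra Nxs => /eqP ->; rewrite opprK.
- by apply: contra Nxs => /eqP <-.
- exact: IHs.
Qed.

Lemma size_sign_reps s : (forall v, v \in s -> v != 0) -> antipodal s ->
  (2 * size (sign_reps s) <= size s)%N.
Proof.
move=> s_neq0 s_anti; set r := sign_reps s.
have -> : (2 * size r = size (r ++ map -%R r))%N by rewrite size_cat size_map mul2n addnn.
apply: uniq_leq_size => [|x].
  rewrite cat_uniq sign_reps_uniq (map_inj_uniq oppr_inj) sign_reps_uniq andbT /=.
  apply/hasPn => _ /mapP [w wr ->]; apply/negP => Nwr.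
  by have := sign_reps_neq_opp s_neq0 Nwr wr; rewrite eqxx.
rewrite mem_cat => /orP [/sign_reps_sub //|/mapP [w /sign_reps_sub ws ->]].
exact: s_anti.
Qed.

Lemma exists_rows_cover_antipodal s : s != [::] -> (size s <= 2 * d)%N ->
  (forall v, v \in s -> v != 0) -> antipodal s ->
  exists Y : 'M[R]_d, (forall i, row i Y \in s) /\
    forall v, v \in s -> exists i, v = row i Y \/ v = - row i Y.
Proof.
move=> s0 s_le s_neq0 s_anti; set r := sign_reps s.
have r_le : (size r <= d)%N.
  by rewrite -(@leq_pmul2l 2) // (leq_trans _ s_le) // size_sign_reps.
exists (\matrix_(i, k) (nth (head 0 s) r i) 0 k).
have rowY i : row i (\matrix_(i, k) (nth (head 0 s) r i) 0 k) = nth (head 0 s) r i.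
  by apply/rowP => k; rewrite !mxE.
split=> [i|v /sign_reps_cover [u ur vu]]; rewrite ?rowY.
  case: (ltnP i (size r)) => [/(mem_nth (head 0 s))/sign_reps_sub //|/(nth_default _) ->].
  exact: head_in.
have ui : (index u r < d)%N by apply: leq_trans r_le; rewrite index_mem.
by exists (Ordinal ui); rewrite rowY nth_index.
Qed.

End SignRepresentatives.

Section Covering.
Variables (R : realType) (d : nat).
Implicit Types (s : seq 'rV[R]_d) (x y u v : 'rV[R]_d) (c : R).

Lemma maxdot_ge s x v : v \in s -> dotp x v <= maxdot s x.
Proof. by move=> vs; apply: le_bigmax_seq. Qed.

Lemma maxdot_le s x c : s != [::] ->
  (forall v, v \in s -> dotp x v <= c) -> maxdot s x <= c.
Proof.
by move=> s0 le_c; rewrite /maxdot big_seq; apply: bigmax_le; rewrite ?le_c ?head_in.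
Qed.

Lemma maxdot_lt s x c : s != [::] ->
  (forall v, v \in s -> dotp x v < c) -> maxdot s x < c.
Proof.
by move=> s0 lt_c; rewrite /maxdot big_seq; apply: bigmax_lt; rewrite ?lt_c ?head_in.
Qed.

Lemma maxdot_ge0 s x : s != [::] -> antipodal s -> 0 <= maxdot s x.
Proof.
move=> /(head_in 0) vs s_anti; set v := head 0 s in vs.
have := maxdot_ge x vs; have := maxdot_ge x (s_anti v vs); rewrite dotpNr.
lra.
Qed.

Lemma eta_cov_le s x : s != [::] -> antipodal s -> dotp x x = 1 ->
  eta_cov s <= maxdot s x.
Proof.
move=> s0 s_anti x1; apply: ge_inf; last by exists x.
by exists 0 => _ [y _ <-]; apply: maxdot_ge0.
Qed.

Lemma eta_cov_ge s c x : dotp x x = 1 ->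
  (forall y, dotp y y = 1 -> c <= maxdot s y) -> c <= eta_cov s.
Proof.
move=> x1 le_c; apply: lb_le_inf; first by exists (maxdot s x), x.
by move=> _ [y y1 <-]; apply: le_c.
Qed.

Lemma dotp_le_abs_pm x u v : v = u \/ v = - u -> dotp x v <= `|dotp x u|.
Proof. by case=> ->; rewrite ?dotpNr ?ler_normr ?lexx ?orbT. Qed.

Lemma orthonormal_sum_sqr_dotp (a : 'I_d -> 'rV[R]_d) y :
  orthonormal_basis a -> \sum_i dotp y (a i) ^+ 2 = dotp y y.
Proof.
move=> a_on; pose A := \matrix_(i, k) (a i) 0 k.
have rowA i : row i A = a i by apply/rowP => k; rewrite !mxE.
have /mulmx1C ATA : A *m A^T = 1%:M.
  by apply/matrixP => i j; rewrite -dotp_row !rowA a_on mxE.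
have yAT i : (y *m A^T) 0 i = dotp y (a i) by rewrite -rowA -dotp_row row_id.
have -> : dotp y y = dotp (y *m A^T) (y *m A^T).
  by rewrite /dotp trmx_mul trmxK mulmxA -(mulmxA y) ATA mulmx1.
by rewrite dotpE; apply: eq_bigr => i _; rewrite expr2 yAT.
Qed.

Lemma cross_polytope_maxdot_ge (a : 'I_d -> 'rV[R]_d) s y : (0 < d)%N ->
  orthonormal_basis a -> (forall i, a i \in s /\ - a i \in s) -> dotp y y = 1 ->
  1 / Num.sqrt d%:R <= maxdot s y.
Proof.
move=> d0 a_on a_s y1; have [i] := exists_ge_mean (fun i => dotp y (a i) ^+ 2) d0.
rewrite orthonormal_sum_sqr_dotp // y1 => le_sqr.
have c_le : 1 / Num.sqrt d%:R <= `|dotp y (a i)|.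
  rewrite -ler_sqr ?nnegrE ?normr_ge0 ?divr_ge0 ?sqrtr_ge0 //.
  by rewrite real_normK ?num_real // expr_div_n expr1n sqr_sqrtr.
have [ya_ge0|ya_lt0] := leP 0 (dotp y (a i)).
  by apply: le_trans c_le (le_trans _ (maxdot_ge y (proj1 (a_s i)))); rewrite ger0_norm.
apply: le_trans c_le (le_trans _ (maxdot_ge y (proj2 (a_s i)))).
by rewrite dotpNr ltr0_norm.
Qed.

End Covering.

Theorem theorem2p2 (R : realType) (d : nat) (s : seq 'rV[R]_d) :
  (2 <= d)%N -> size s = (2 * d)%N -> on_sphere s -> antipodal s ->
  eta_cov s <= 1 / Num.sqrt (d%:R) /\
  (eta_cov s = 1 / Num.sqrt (d%:R) <->
   exists a : 'I_d -> 'rV[R]_d, orthonormal_basis a /\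
     forall v, v \in s <-> exists i, v = a i \/ v = - a i).
Proof.
move=> d2 s_size s_sph s_anti; have d0 : (0 < d)%N by apply: leq_trans d2.
have s0 : s != [::] by rewrite -size_eq0 s_size muln_eq0 -lt0n d0.
have s_neq0 v : v \in s -> v != 0 by move/s_sph/unit_neq0.
have [Y [Ys Ycov]] := exists_rows_cover_antipodal s0 (eq_leq s_size) s_neq0 s_anti.
have [x [x1 [x_le x_lt]]] := exists_unit_small_dotp_rows (fun i => s_sph _ (Ys i)) d0.
have eta_le : eta_cov s <= 1 / Num.sqrt d%:R.
  apply: le_trans (eta_cov_le s0 s_anti x1) (maxdot_le s0 _) => v /Ycov [i vY].
  exact: le_trans (dotp_le_abs_pm x vY) (x_le i).
split=> //; split=> [eta_eq | [a [a_on a_s]]].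
  have [YYT | YYTn] := eqVneq (Y *m Y^T) 1%:M; last first.
    suff : maxdot s x < 1 / Num.sqrt d%:R.
      by rewrite -eta_eq ltNge (eta_cov_le s0 s_anti x1).
    apply: maxdot_lt s0 _ => v /Ycov [i vY].
    exact: le_lt_trans (dotp_le_abs_pm x vY) (x_lt YYTn i).
  exists (fun i => row i Y); split; first by move=> i j; rewrite dotp_row YYT mxE.
  by move=> v; split=> [/Ycov | [i [->|->]]] //; apply: s_anti.
apply/le_anti; rewrite eta_le; apply: eta_cov_ge x1 _ => y y1.
by apply: cross_polytope_maxdot_ge => // i; rewrite !a_s; split; exists i; [left|right].
Qed.
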